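(* Let $(G,\sigma)$ be a connection graph. For any distinct $i,j\in V$, $r^\sigma_{ij}\le r_{ij}$.
   Context: A connection graph $(G,\sigma)$: finite connected weighted graph $G=(V,E,W)$, $V=\{1,\dots,n\}$, $w_{xy}>0$ iff $\{x,y\}\in E$, $\deg(x)=\sum_yw_{xy}$, and a $d$-dimensional signature $\sigma$ mapping oriented edges to $\mathsf{O}(d)$ with $\sigma_{yx}=\sigma_{xy}^{\mathrm T}$. $r_{ij}=(e_i-e_j)^{\mathrm T}L^\dagger(e_i-e_j)$ is the classical effective resistance, $L=D-W$. Connection Laplacian $\mathcal{L}$: $nd\times nd$ block matrix with blocks $\deg(x)I_d$ on the diagonal, $-w_{xy}\sigma_{xy}$ for $x\sim y$, $0$ otherwise. $\Omega^0_{ij}=\mathbb{E}[\prod_{\ell=1}^{T^0_j}\sigma_{X_{\ell-1}X_\ell}\mid X_0=i]$ for the simple random walk with transition probabilities $w_{xy}/\deg(x)$ and $T^0_j=\inf\{t\ge0:X_t=j\}$. $N_{ij}$: $nd\times d$ block column with $I_d$ at node $i$, $-(\Omega^0_{ij})^{\mathrm T}$ at node $j$, $0$ elsewhere; $\mathcal{W}_{i\to j}=\mathcal{L}^\dagger N_{ij}$. Connection effective resistance: $r^\sigma_{ij}=\frac{1}{2d}\operatorname{Tr}\big(\mathcal{W}_{i\to j}^{\mathrm T}\mathcal{L}\mathcal{W}_{i\to j}+\mathcal{W}_{j\to i}^{\mathrm T}\mathcal{L}\mathcal{W}_{j\to i}\big)$. *)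

From HB Require Import structures.
From mathcomp Require Import all_boot all_order all_algebra.
From mathcomp Require Import boolp classical_sets reals topology normedtype sequences.
Set Implicit Arguments. Unset Strict Implicit. Unset Printing Implicit Defensive.
Import Order.TTheory GRing.Theory Num.Theory.
Import numFieldNormedType.Exports.
Local Open Scope ring_scope.

Section ConnectionGraph.
Variable R : realType.

Definition moore_penrose m k (A : 'M[R]_(m, k)) (X : 'M[R]_(k, m)) : Prop :=
  [/\ A *m X *m A = A, X *m A *m X = X,
      (A *m X)^T = A *m X & (X *m A)^T = X *m A].

(* The Moore--Penrose pseudo-inverse (it exists and is unique over the reals). *)
Definition pinv m k (A : 'M[R]_(m, k)) : 'M[R]_(k, m) :=
  xget 0 (fun X => moore_penrose A X).

Variables (n d : nat) (w : 'M[R]_n) (sigma : 'I_n -> 'I_n -> 'M[R]_d).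

Definition deg (x : 'I_n) : R := \sum_(y < n) w x y.

Definition adj : rel 'I_n := fun x y => 0 < w x y.

Definition laplacian : 'M[R]_n := \matrix_(x, y) ((x == y)%:R * deg x - w x y).

Definition eff_res (i j : 'I_n) : R :=
  let e : 'cV[R]_n := delta_mx i ord0 - delta_mx j ord0 in
  (e^T *m pinv laplacian *m e) ord0 ord0.

(* block-vector / block-matrix index type: 'M_(\sum_(x < n) d, ...) *)
Notation nd := (\sum_(x < n) d)%N.

Definition conn_laplacian : 'M[R]_(nd, nd) :=
  \mxblock_(x < n, y < n)
     (if x == y then deg x *: (1%:M : 'M[R]_d) else - (w x y *: sigma x y)).

(* A walk of length t is a function p : 'I_t.+1 -> 'I_n, p k = X_k. *)
Definition walk_step t (p : {ffun 'I_t.+1 -> 'I_n}) (k : nat) : 'I_n * 'I_n :=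
  (p (inord k), p (inord k.+1)).

Definition walk_prob t (p : {ffun 'I_t.+1 -> 'I_n}) : R :=
  \prod_(k < t) (let e := walk_step p k in w e.1 e.2 / deg e.1).

Definition walk_sigma t (p : {ffun 'I_t.+1 -> 'I_n}) : 'M[R]_d :=
  foldr (fun k acc => (let e := walk_step p k in sigma e.1 e.2) *m acc)
        1%:M (iota 0 t).

(* first-passage walks from i to j of length t: X_0 = i, X_t = j,
   X_k <> j for k < t (so that T^0_j = t) *)
Definition first_passage (i j : 'I_n) t (p : {ffun 'I_t.+1 -> 'I_n}) : bool :=
  [&& p ord0 == i, p ord_max == j & [forall k : 'I_t.+1, (k < t)%N ==> (p k != j)]].

(* E[ prod_{l=1}^{T} sigma ; T = t | X_0 = i ] *)
Definition omega_term (i j : 'I_n) (t : nat) : 'M[R]_d :=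
  \sum_(p : {ffun 'I_t.+1 -> 'I_n} | first_passage i j p) walk_prob p *: walk_sigma p.

Definition Omega0 (i j : 'I_n) : 'M[R]_d :=
  \matrix_(a, b) limn (series (fun t => omega_term i j t a b)).

Definition Nmat (i j : 'I_n) : 'M[R]_(nd, d) :=
  \mxcol_(x < n) (if x == i then 1%:M
                  else if x == j then - (Omega0 i j)^T else 0).

Definition Wmat (i j : 'I_n) : 'M[R]_(nd, d) := pinv conn_laplacian *m Nmat i j.

Definition conn_eff_res (i j : 'I_n) : R :=
  (2 * d%:R)^-1 * \tr ((Wmat i j)^T *m conn_laplacian *m Wmat i j
                      + (Wmat j i)^T *m conn_laplacian *m Wmat j i).

End ConnectionGraph.

Definition connection_graph (R : realType) (n d : nat) (w : 'M[R]_n)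
  (sigma : 'I_n -> 'I_n -> 'M[R]_d) : Prop :=
  (forall x y, w x y = w y x) /\
  (forall x y, 0 <= w x y) /\
  (forall x, w x x = 0) /\
  (forall x y, connect (adj w) x y) /\
  (forall x y, 0 < w x y -> (sigma x y)^T *m sigma x y = 1%:M) /\
  (forall x y, 0 < w x y -> sigma y x = (sigma x y)^T).

(* Fix i <> j and let U solve the Dirichlet problem for the connection Laplacian
   L^sigma with source I_d at i and U_j = 0.  Pairing L^sigma U with the extension
   Omega^0_{.j}, which is harmonic off j by conditioning on the first step of the walk,
   gives L^sigma U = N_ij, hence W_{i->j}^T L^sigma W_{i->j} = U^T L^sigma U, whose trace
   is tr U_i.  The column norms f_a(x) = |U_x e_a| vanish at j and, by Kato's inequality,
   satisfy sum_a E(f_a) <= 2 tr(U^T L^sigma U), where E is the classical Dirichlet form.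
   The classical bound 2 (f i - f j)^2 <= r_ij E(f) then gives sum_a f_a(i)^2 <= r_ij tr U_i,
   and tr U_i <= sum_a f_a(i) with Cauchy-Schwarz yields tr U_i <= d r_ij.  Averaging the
   two orientations i->j and j->i gives r^sigma_ij <= r_ij. *)

From HB Require Import structures.
From mathcomp Require Import all_boot all_order all_algebra.
From mathcomp Require Import boolp classical_sets reals topology normedtype sequences.
From mathcomp Require Import ring lra.
Import Order.TTheory GRing.Theory Num.Theory.
Import numFieldNormedType.Exports.
Local Open Scope ring_scope.

Set Implicit Arguments. Unset Strict Implicit. Unset Printing Implicit Defensive.

Section Gram.
Variable R : realFieldType.

Definition frob2 p q (M : 'M[R]_(p, q)) : R := \tr (M^T *m M).

Lemma gram_diagE p q (M : 'M[R]_(p, q)) a : (M^T *m M) a a = \sum_b M b a ^+ 2.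
Proof. by rewrite mxE; apply: eq_bigr => b _; rewrite mxE expr2. Qed.

Lemma gram_diag_ge0 p q (M : 'M[R]_(p, q)) a : 0 <= (M^T *m M) a a.
Proof. by rewrite gram_diagE; apply: sumr_ge0 => b _; rewrite sqr_ge0. Qed.

Lemma frob2_ge0 p q (M : 'M[R]_(p, q)) : 0 <= frob2 M.
Proof. by apply: sumr_ge0 => a _; rewrite gram_diag_ge0. Qed.

Lemma frob2_eq0 p q (M : 'M[R]_(p, q)) : frob2 M = 0 -> M = 0.
Proof.
move=> M0; apply/matrixP => b a; rewrite mxE.
have := psumr_eq0P (fun c _ => gram_diag_ge0 M c) M0 (i := a) isT.
rewrite gram_diagE => /(psumr_eq0P (fun c _ => sqr_ge0 (M c a))) /(_ b isT) /eqP.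
by rewrite sqrf_eq0 => /eqP.
Qed.

Lemma gram_eq0 p q (M : 'M[R]_(p, q)) : M^T *m M = 0 -> M = 0.
Proof. by move=> M0; apply: frob2_eq0; rewrite /frob2 M0 mxtrace0. Qed.

Lemma mulmx_gram_eq0 p q (M : 'M[R]_(p, q)) (v : 'rV_p) :
  v *m M *m M^T = 0 -> v *m M = 0.
Proof.
move=> vM0; apply: trmx_inj; rewrite trmx0; apply: gram_eq0.
by rewrite trmxK trmx_mul mulmxA vM0 mul0mx.
Qed.

Lemma gram_orth p q (S : 'M[R]_p) (M : 'M[R]_(p, q)) :
  S^T *m S = 1%:M -> (S *m M)^T *m (S *m M) = M^T *m M.
Proof. by move=> SS; rewrite trmx_mul mulmxA -(mulmxA M^T) SS mulmx1. Qed.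

Lemma frob2B_orth p q (S : 'M[R]_p) (M N : 'M[R]_(p, q)) :
  S^T *m S = 1%:M ->
  frob2 (M - S *m N) = frob2 M - 2 * \tr (M^T *m (S *m N)) + frob2 N.
Proof.
move=> SS; rewrite /frob2 [(M - _)^T]linearB /= mulmxBl !mulmxBr gram_orth // !raddfB /=.
rewrite -[\tr ((S *m N)^T *m M)]mxtrace_tr trmx_mul trmxK; ring.
Qed.

End Gram.

Section MoorePenrose.
Variable R : realType.

Lemma moore_penrose_rank_factor m k r (B : 'M[R]_(m, r)) (C : 'M[R]_(r, k)) :
  B^T *m B \in unitmx -> C *m C^T \in unitmx ->
  moore_penrose (B *m C) (C^T *m invmx (C *m C^T) *m invmx (B^T *m B) *m B^T).
Proof.
move=> uB uC.
have BCX : B *m C *m (C^T *m invmx (C *m C^T) *m invmx (B^T *m B) *m B^T)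
          = B *m invmx (B^T *m B) *m B^T.
  by rewrite -!mulmxA (mulmxA C) (mulmxA (C *m C^T)) mulmxV // mul1mx.
have XBC : C^T *m invmx (C *m C^T) *m invmx (B^T *m B) *m B^T *m (B *m C)
          = C^T *m invmx (C *m C^T) *m C.
  by rewrite -!mulmxA (mulmxA B^T) (mulmxA (invmx (B^T *m B))) mulVmx // mul1mx.
split.
- by rewrite BCX -!mulmxA (mulmxA B^T) (mulmxA (invmx (B^T *m B))) mulVmx // mul1mx.
- by rewrite XBC -!mulmxA (mulmxA C) (mulmxA (invmx (C *m C^T))) mulVmx // mul1mx.
- by rewrite BCX !trmx_mul trmxK trmx_inv trmx_mul trmxK mulmxA.
- by rewrite XBC !trmx_mul trmxK trmx_inv trmx_mul trmxK mulmxA.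
Qed.

Lemma moore_penrose_exists m k (A : 'M[R]_(m, k)) : exists X, moore_penrose A X.
Proof.
have uB : (col_base A)^T *m col_base A \in unitmx.
  rewrite -row_free_unit; apply: inj_row_free => v.
  rewrite mulmxA -{2}[col_base A]trmxK => /mulmx_gram_eq0/eqP.
  rewrite mulmx_free_eq0 => [/eqP //|].
  by rewrite /row_free mxrank_tr; have := col_base_full A.
have uC : row_base A *m (row_base A)^T \in unitmx.
  rewrite -row_free_unit; apply: inj_row_free => v.
  rewrite mulmxA => /mulmx_gram_eq0/eqP; rewrite mulmx_free_eq0 => [/eqP //|].
  exact: row_base_free.
by rewrite -(mulmx_base A); eexists; apply: moore_penrose_rank_factor uB uC.
Qed.

Lemma pinvP m k (A : 'M[R]_(m, k)) : moore_penrose A (pinv A).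
Proof. by have [X AX] := moore_penrose_exists A; apply: xgetI AX. Qed.

Section Symmetric.
Variables (m : nat) (A X : 'M[R]_m).
Hypotheses (Asym : A^T = A) (AX : moore_penrose A X).

Lemma moore_penrose_sym_mulmx : A *m X^T *m A = A.
Proof.
have [AXA _ _ _] := AX.
by rewrite -{1}Asym -{2}Asym -!trmx_mul mulmxA AXA Asym.
Qed.

Lemma moore_penrose_range (b : 'cV[R]_m) :
  (forall v : 'cV_m, A *m v = 0 -> v^T *m b = 0) -> A *m (X *m b) = b.
Proof.
have [AXA _ AXsym _] := AX.
move=> b_perp; apply/eqP; rewrite eq_sym -subr_eq0; apply/eqP.
set v := b - _.
have AAX : A *m A *m X = A.
  by rewrite -mulmxA -AXsym trmx_mul Asym mulmxA moore_penrose_sym_mulmx.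
have Av : A *m v = 0 by rewrite mulmxBr !mulmxA AAX subrr.
have vA : v^T *m A = 0 by rewrite -Asym -trmx_mul Av trmx0.
apply: gram_eq0.
by rewrite {2}/v mulmxBr b_perp // (mulmxA v^T) vA mul0mx subrr.
Qed.

Lemma moore_penrose_form k (U : 'M[R]_(m, k)) :
  (A *m U)^T *m X *m (A *m U) = U^T *m A *m U.
Proof.
have [AXA _ _ _] := AX.
have UAXA : U^T *m A *m X *m A = U^T *m A by rewrite -!mulmxA (mulmxA A) AXA.
by rewrite trmx_mul Asym !mulmxA UAXA.
Qed.

Lemma moore_penrose_energy k (U : 'M[R]_(m, k)) :
  (X *m (A *m U))^T *m A *m (X *m (A *m U)) = U^T *m A *m U.
Proof.
have [AXA _ _ _] := AX.
have UAXtA : U^T *m A *m X^T *m A = U^T *m A.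
  by rewrite -!mulmxA (mulmxA A) moore_penrose_sym_mulmx.
have UAXA : U^T *m A *m X *m A = U^T *m A by rewrite -!mulmxA (mulmxA A) AXA.
by rewrite !trmx_mul Asym !mulmxA UAXtA UAXA.
Qed.

End Symmetric.
End MoorePenrose.

Section RealInequalities.
Variable R : realFieldType.

Lemma sqr_le_of_quadratic_ge0 (p q s : R) : 0 <= s ->
  (forall t, 0 <= p - 2 * t * q + t ^+ 2 * s) -> q ^+ 2 <= p * s.
Proof.
move=> s_ge0 quad_ge0; have [s_gt0|] := ltP 0 s.
  have := quad_ge0 (q / s).
  have -> : p - 2 * (q / s) * q + (q / s) ^+ 2 * s = p - q ^+ 2 / s.
    by field; rewrite gt_eqF.
  by rewrite subr_ge0 ler_pdivrMr.
move=> s_le0; have s0 : s = 0 by apply/le_anti; rewrite s_le0 s_ge0.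
rewrite s0 in quad_ge0 *.
have [->|q_neq0] := eqVneq q 0; first by rewrite expr0n mulr0.
have := quad_ge0 ((p + 1) / (2 * q)); rewrite mulr0 addr0.
have -> : 2 * ((p + 1) / (2 * q)) * q = p + 1 by field.
lra.
Qed.

Lemma cauchy_schwarz_sum (I : finType) (c a b : I -> R) :
  (forall k, 0 <= c k) ->
  (\sum_k c k * a k * b k) ^+ 2 <=
  (\sum_k c k * a k ^+ 2) * (\sum_k c k * b k ^+ 2).
Proof.
move=> c_ge0; apply: sqr_le_of_quadratic_ge0 => [|t].
  by apply: sumr_ge0 => k _; rewrite mulr_ge0 ?sqr_ge0.
have -> : (\sum_k c k * a k ^+ 2) - 2 * t * (\sum_k c k * a k * b k)
            + t ^+ 2 * (\sum_k c k * b k ^+ 2)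
          = \sum_k c k * (a k - t * b k) ^+ 2.
  rewrite !mulr_sumr -sumrN -!big_split /=; apply: eq_bigr => k _; ring.
by apply: sumr_ge0 => k _; rewrite mulr_ge0 ?sqr_ge0.
Qed.

Lemma cauchy_schwarz (I : finType) (a b : I -> R) :
  (\sum_k a k * b k) ^+ 2 <= (\sum_k a k ^+ 2) * (\sum_k b k ^+ 2).
Proof.
have one_mul (F : I -> R) : \sum_k F k = \sum_k 1 * F k.
  by apply: eq_bigr => k _; rewrite mul1r.
rewrite (one_mul (fun k => a k * b k)) (one_mul (fun k => a k ^+ 2)).
rewrite (one_mul (fun k => b k ^+ 2)); under eq_bigr do rewrite mulrA.
exact: cauchy_schwarz_sum.
Qed.

Lemma le_card_mul_of_sum_sqr (I : finType) (f : I -> R) (Q r : R) : 0 <= r ->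
  Q <= \sum_k f k -> \sum_k f k ^+ 2 <= r * Q -> Q <= #|I|%:R * r.
Proof.
move=> r_ge0 Q_le sqr_le; have [Q_le0|Q_gt0] := leP Q 0.
  by apply: le_trans Q_le0 _; rewrite mulr_ge0.
have CS : (\sum_k f k) ^+ 2 <= (\sum_k f k ^+ 2) * #|I|%:R.
  have := cauchy_schwarz f (fun _ => 1).
  by rewrite sumr_const expr1n; under eq_bigr do rewrite mulr1.
have QQ : Q ^+ 2 <= #|I|%:R * r * Q.
  have QS : Q ^+ 2 <= (\sum_k f k) ^+ 2.
    have S_gt0 := lt_le_trans Q_gt0 Q_le.
    by rewrite ler_sqr ?nnegrE ?(ltW Q_gt0) ?(ltW S_gt0).
  apply: le_trans QS (le_trans CS _).
  by rewrite mulrC -mulrA ler_wpM2l.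
by rewrite -(ler_pM2r Q_gt0) -expr2.
Qed.

End RealInequalities.

Lemma sqr_sqrtrB_le (R : rcfType) (A B C : R) : 0 <= A -> 0 <= C -> B ^+ 2 <= A * C ->
  (Num.sqrt A - Num.sqrt C) ^+ 2 <= A - 2 * B + C.
Proof.
move=> A_ge0 C_ge0 BAC.
have : B <= Num.sqrt A * Num.sqrt C.
  rewrite -sqrtrM //; apply: le_trans (ler_norm B) _.
  by rewrite -sqrtr_sqr ler_sqrt ?mulr_ge0.
rewrite sqrrB !sqr_sqrtr //; lra.
Qed.

Lemma connect_transport (T : finType) (e : rel T) (P : T -> Prop) x y :
  (forall x y, e x y -> P x -> P y) -> connect e x y -> P x -> P y.
Proof.
move=> step /connectP [p + ->]; elim: p x => [|z p IH] x //= /andP [xz pz] Px.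
exact: IH pz (step x z xz Px).
Qed.

Section Laplacian.
Variables (R : realType) (n : nat) (w : 'M[R]_n).
Hypotheses (wsym : forall x y, w x y = w y x) (wge0 : forall x y, 0 <= w x y).

Definition dirichlet (f g : 'I_n -> R) : R :=
  \sum_x \sum_y w x y * (f x - f y) * (g x - g y).

Lemma dirichlet_sqrE f : dirichlet f f = \sum_x \sum_y w x y * (f x - f y) ^+ 2.
Proof. by apply: eq_bigr => x _; apply: eq_bigr => y _; rewrite expr2 mulrA. Qed.

Lemma dirichlet_ge0 f : 0 <= dirichlet f f.
Proof.
rewrite dirichlet_sqrE; apply: sumr_ge0 => x _; apply: sumr_ge0 => y _.
by rewrite mulr_ge0 ?sqr_ge0.
Qed.

Lemma dirichlet_cauchy_schwarz f g :
  dirichlet f g ^+ 2 <= dirichlet f f * dirichlet g g.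
Proof.
rewrite !dirichlet_sqrE /dirichlet !pair_big /=.
exact: (@cauchy_schwarz_sum _ _ (fun p => w p.1 p.2) (fun p => f p.1 - f p.2)
  (fun p => g p.1 - g p.2) (fun p => wge0 p.1 p.2)).
Qed.

Lemma dirichlet_eq0_edge f :
  dirichlet f f = 0 -> forall x y, 0 < w x y -> f x = f y.
Proof.
rewrite dirichlet_sqrE => E0 x y wxy.
have term_ge0 x' y' : 0 <= w x' y' * (f x' - f y') ^+ 2 by rewrite mulr_ge0 ?sqr_ge0.
have := psumr_eq0P (fun x' _ => sumr_ge0 _ (fun y' _ => term_ge0 x' y')) E0 (i := x) isT.
move=> /(psumr_eq0P (fun y' _ => term_ge0 x y')) /(_ y isT) /eqP.
by rewrite mulf_eq0 gt_eqF //= sqrf_eq0 subr_eq0 => /eqP.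
Qed.

Lemma laplacian_sym : (laplacian w)^T = laplacian w.
Proof.
apply/matrixP => x y; rewrite !mxE eq_sym wsym.
by case: eqVneq => [->|]; rewrite ?mul0r.
Qed.

Lemma laplacian_rowE x (g : 'I_n -> R) :
  \sum_y laplacian w x y * g y = deg w x * g x - \sum_y w x y * g y.
Proof.
under eq_bigr do rewrite mxE mulrBl.
rewrite sumrB (bigD1 x) //= eqxx mul1r big1 ?addr0 // => y /negbTE.
by rewrite eq_sym => ->; rewrite !mul0r.
Qed.

Lemma laplacian_form (f g : 'cV[R]_n) :
  2 * (f^T *m laplacian w *m g) 0 0 = dirichlet (fun x => f x 0) (fun x => g x 0).
Proof.
set F := fun x => f x 0; set G := fun x => g x 0.
set T := fun x y => w x y * F x * (G x - G y).
have -> : dirichlet F G = \sum_x \sum_y T x y + \sum_x \sum_y T y x.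
  rewrite -big_split; apply: eq_bigr => x _; rewrite -big_split /=.
  by apply: eq_bigr => y _; rewrite /T wsym; ring.
have -> : (f^T *m laplacian w *m g) 0 0 = \sum_x \sum_y T x y.
  rewrite -mulmxA mxE; apply: eq_bigr => x _.
  rewrite [f^T _ _]mxE [(_ *m g) _ _]mxE (laplacian_rowE x (fun y => g y 0)).
  rewrite /deg mulr_suml -sumrB mulr_sumr.
  by apply: eq_bigr => y _; rewrite /T /F /G; ring.
by rewrite [X in _ + X]exchange_big mulr2n mulrDl mul1r.
Qed.

Lemma eff_res_sym i j : eff_res w j i = eff_res w i j.
Proof.
rewrite /eff_res /= -[delta_mx j _ - _]opprB (linearN trmx) /=.
by rewrite mulNmx mulmxN mulNmx opprK.
Qed.

Section EffectiveResistance.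
Hypothesis conn : forall x y, connect (adj w) x y.
Variables i j : 'I_n.

Let e : 'cV[R]_n := delta_mx i ord0 - delta_mx j ord0.
Let u : 'cV[R]_n := pinv (laplacian w) *m e.

Lemma delta_diff_dot (v : 'cV[R]_n) : (v^T *m e) 0 0 = v i 0 - v j 0.
Proof. by rewrite mulmxBr -!colE !mxE. Qed.

Lemma laplacian_potential : laplacian w *m u = e.
Proof.
rewrite /u; apply: (moore_penrose_range laplacian_sym (pinvP _)) => v Lv.
have Ev : dirichlet (fun x => v x 0) (fun x => v x 0) = 0.
  by rewrite -laplacian_form -mulmxA Lv mulmx0 mxE mulr0.
have vji : v j 0 = v i 0.
  apply: (connect_transport (P := fun x => v x 0 = v i 0)) (conn i j) _ => // x y.
  by move=> /(dirichlet_eq0_edge Ev) <-.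
by apply/matrixP => a b; rewrite !ord1 delta_diff_dot vji subrr mxE.
Qed.

Lemma eff_res_dirichlet :
  2 * eff_res w i j = dirichlet (fun x => u x 0) (fun x => u x 0).
Proof.
rewrite -laplacian_form; congr (2 * _).
have -> : eff_res w i j = (e^T *m pinv (laplacian w) *m e) 0 0 by [].
by rewrite -laplacian_potential (moore_penrose_form laplacian_sym (pinvP _)).
Qed.

Lemma dirichlet_potential f : 2 * (f i - f j) = dirichlet f (fun x => u x 0).
Proof.
have := laplacian_form (\col_x f x) u.
rewrite -mulmxA laplacian_potential delta_diff_dot !mxE => ->.
by congr (dirichlet _ _); apply/funext => x; rewrite mxE.
Qed.

Lemma eff_res_ge0 : 0 <= eff_res w i j.
Proof. by have := dirichlet_ge0 (fun x => u x 0); rewrite -eff_res_dirichlet; lra. Qed.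

Lemma sqr_le_eff_res_dirichlet f :
  2 * (f i - f j) ^+ 2 <= eff_res w i j * dirichlet f f.
Proof.
have := dirichlet_cauchy_schwarz f (fun x => u x 0).
rewrite -dirichlet_potential -eff_res_dirichlet.
have := dirichlet_ge0 f; nra.
Qed.

End EffectiveResistance.
End Laplacian.

Section ColumnNorm.
Variable R : rcfType.

Definition colnorm p q (M : 'M[R]_(p, q)) a : R := Num.sqrt ((M^T *m M) a a).

Lemma colnormB_sqr_le p q (M N : 'M[R]_(p, q)) a :
  (colnorm M a - colnorm N a) ^+ 2 <= ((M - N)^T *m (M - N)) a a.
Proof.
have -> : ((M - N)^T *m (M - N)) a a =
    (M^T *m M) a a - 2 * (M^T *m N) a a + (N^T *m N) a a.
  rewrite !gram_diagE [(M^T *m N) a a]mxE mulr_sumr -sumrB -big_split /=.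
  by apply: eq_bigr => b _; rewrite !mxE; ring.
apply: sqr_sqrtrB_le; rewrite ?gram_diag_ge0 // !gram_diagE mxE.
by under eq_bigr do rewrite mxE; apply: cauchy_schwarz.
Qed.

Lemma diag_le_colnorm p (M : 'M[R]_p) a : M a a <= colnorm M a.
Proof.
apply: le_trans (ler_norm _) _; rewrite -sqrtr_sqr ler_sqrt ?gram_diag_ge0 //.
by rewrite gram_diagE (bigD1 a) //= lerDl sumr_ge0 // => b _; rewrite sqr_ge0.
Qed.

End ColumnNorm.

Section ConnectionLaplacian.
Variables (R : realType) (n d : nat) (w : 'M[R]_n) (sigma : 'I_n -> 'I_n -> 'M[R]_d).
Hypotheses (wsym : forall x y, w x y = w y x) (wge0 : forall x y, 0 <= w x y).
Hypothesis w0 : forall x, w x x = 0.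
Hypothesis sigma_orth : forall x y, 0 < w x y -> (sigma x y)^T *m sigma x y = 1%:M.
Hypothesis sigma_sym : forall x y, 0 < w x y -> sigma y x = (sigma x y)^T.

Local Notation nd := (\sum_(x < n) d)%N.
Local Notation CL := (conn_laplacian w sigma).

Definition conn_block (x y : 'I_n) : 'M[R]_d :=
  if x == y then deg w x *: 1%:M else - (w x y *: sigma x y).

Definition node_block k (V : 'M[R]_(nd, k)) (x : 'I_n) : 'M[R]_(d, k) :=
  @submxcol _ _ (fun _ => d) k V x.

Lemma node_block_conn_laplacian k (V : 'M[R]_(nd, k)) x :
  node_block (CL *m V) x = \sum_y conn_block x y *m node_block V y.
Proof.
by rewrite /node_block -{1}[V]submxcolK mul_mxblock_mxrow mxcolK.
Qed.

Lemma trmx_mul_node_block k l (V : 'M[R]_(nd, k)) (W : 'M[R]_(nd, l)) :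
  V^T *m W = \sum_x (node_block V x)^T *m node_block W x.
Proof.
by rewrite /node_block -{1}[V]submxcolK -{1}[W]submxcolK tr_mxcol mul_mxrow_mxcol.
Qed.

Lemma weight_eq0_or_gt0 x y : w x y = 0 \/ 0 < w x y.
Proof. by have := wge0 x y; rewrite le_eqVlt => /orP [/eqP <-|]; [left|right]. Qed.

Lemma conn_block_tr x y : (conn_block y x)^T = conn_block x y.
Proof.
rewrite /conn_block eq_sym; case: eqP => [->|_]; first by rewrite linearZ /= trmx1.
rewrite linearN linearZ /= wsym; have [->|wxy] := weight_eq0_or_gt0 x y.
  by rewrite !scale0r.
by rewrite sigma_sym // trmxK.
Qed.

Lemma conn_laplacian_sym : CL^T = CL.
Proof.
rewrite /conn_laplacian tr_mxblock; apply: eq_mxblock => x y.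
exact: conn_block_tr.
Qed.

Lemma conn_laplacian_trace k (V : 'M[R]_(nd, k)) :
  \tr (V^T *m CL *m V) = \sum_x (deg w x * frob2 (node_block V x)
    - \sum_y w x y * \tr ((node_block V x)^T *m (sigma x y *m node_block V y))).
Proof.
rewrite -mulmxA trmx_mul_node_block raddf_sum /=; apply: eq_bigr => x _.
rewrite node_block_conn_laplacian mulmx_sumr raddf_sum /= (bigD1 x) //=.
rewrite [X in _ = _ - X](bigD1 x) //= w0 mul0r add0r /conn_block eqxx.
rewrite -scalemxAl mul1mx -scalemxAr linearZ /= -sumrN; congr (_ + _).
apply: eq_bigr => y /negbTE; rewrite eq_sym => ->.
by rewrite mulNmx -scalemxAl mulmxN -scalemxAr raddfN /= mxtraceZ.
Qed.

Lemma conn_energy k (V : 'M[R]_(nd, k)) :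
  2 * \tr (V^T *m CL *m V) =
  \sum_x \sum_y w x y * frob2 (node_block V x - sigma x y *m node_block V y).
Proof.
set T := fun x => frob2 (node_block V x).
set S := fun x y => \tr ((node_block V x)^T *m (sigma x y *m node_block V y)).
have edge x y : w x y * frob2 (node_block V x - sigma x y *m node_block V y) =
                w x y * T x + w x y * T y - 2 * (w x y * S x y).
  have [->|wxy] := weight_eq0_or_gt0 x y; first by rewrite !mul0r !mulr0 !addr0 subr0.
  by rewrite frob2B_orth ?sigma_orth //; rewrite /T /S; ring.
have degT : \sum_x \sum_y w x y * T x = \sum_x deg w x * T x.
  by apply: eq_bigr => x _; rewrite /deg mulr_suml.
have degT' : \sum_x \sum_y w x y * T y = \sum_x deg w x * T x.
  rewrite exchange_big; apply: eq_bigr => x _; rewrite /deg mulr_suml.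
  by apply: eq_bigr => y _; rewrite wsym.
transitivity (\sum_x \sum_y w x y * T x + \sum_x \sum_y w x y * T y
              - 2 * \sum_x \sum_y w x y * S x y).
  by rewrite degT degT' conn_laplacian_trace sumrB /T /S; ring.
rewrite mulr_sumr -big_split -sumrB /=; apply: eq_bigr => x _.
rewrite mulr_sumr -big_split -sumrB /=; apply: eq_bigr => y _.
exact: esym (edge x y).
Qed.

Lemma conn_energy_eq0_edge k (V : 'M[R]_(nd, k)) :
  \tr (V^T *m CL *m V) = 0 ->
  forall x y, 0 < w x y -> node_block V x = sigma x y *m node_block V y.
Proof.
move=> E0 x y wxy; apply/eqP; rewrite -subr_eq0; apply/eqP/frob2_eq0.
have term_ge0 x' y' :
    0 <= w x' y' * frob2 (node_block V x' - sigma x' y' *m node_block V y').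
  by rewrite mulr_ge0 ?frob2_ge0.
have := conn_energy V; rewrite E0 mulr0 => /esym.
move=> /(psumr_eq0P (fun x' _ => sumr_ge0 _ (fun y' _ => term_ge0 x' y'))) /(_ x isT).
move=> /(psumr_eq0P (fun y' _ => term_ge0 x y')) /(_ y isT) /eqP.
by rewrite mulf_eq0 gt_eqF //= => /eqP.
Qed.

Lemma dirichlet_colnorm_le k (U : 'M[R]_(nd, k)) :
  \sum_a dirichlet w (fun x => colnorm (node_block U x) a)
                     (fun x => colnorm (node_block U x) a)
  <= 2 * \tr (U^T *m CL *m U).
Proof.
rewrite conn_energy; under eq_bigr do rewrite dirichlet_sqrE.
rewrite exchange_big /=; apply: ler_sum => x _.
rewrite exchange_big /=; apply: ler_sum => y _.
rewrite /frob2 /mxtrace mulr_sumr; apply: ler_sum => a _.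
have [->|wxy] := weight_eq0_or_gt0 x y; first by rewrite !mul0r.
rewrite ler_wpM2l //.
have -> : colnorm (node_block U y) a = colnorm (sigma x y *m node_block U y) a.
  by rewrite /colnorm gram_orth ?sigma_orth.
exact: colnormB_sqr_le.
Qed.

End ConnectionLaplacian.

Section Green.
Variables (R : realType) (n d : nat) (w : 'M[R]_n) (sigma : 'I_n -> 'I_n -> 'M[R]_d).
Hypotheses (wsym : forall x y, w x y = w y x) (wge0 : forall x y, 0 <= w x y).
Hypothesis w0 : forall x, w x x = 0.
Hypothesis conn : forall x y, connect (adj w) x y.
Hypothesis sigma_orth : forall x y, 0 < w x y -> (sigma x y)^T *m sigma x y = 1%:M.
Hypothesis sigma_sym : forall x y, 0 < w x y -> sigma y x = (sigma x y)^T.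
Variables (i j : 'I_n).
Hypothesis ij : i != j.

Local Notation nd := (\sum_(x < n) d)%N.
Local Notation CL := (conn_laplacian w sigma).
Local Notation blk := (@node_block R n d _).

(* L^sigma with block row and column j replaced by those of the identity: it encodes
   the Dirichlet condition at j, and connectivity makes it invertible. *)
Definition killed_block (x y : 'I_n) : 'M[R]_d :=
  if (x == j) || (y == j) then (x == y)%:R *: 1%:M else conn_block w sigma x y.

Definition killed_laplacian : 'M[R]_nd := \mxblock_(x < n, y < n) killed_block x y.

Lemma node_block_killed k (V : 'M[R]_(nd, k)) x :
  blk (killed_laplacian *m V) x =
  if x == j then blk V j else blk (CL *m V) x - conn_block w sigma x j *m blk V j.
Proof.
rewrite node_block_conn_laplacian /node_block -{1}[V]submxcolK.
rewrite /killed_laplacian mul_mxblock_mxrow mxcolK.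
case: eqVneq => [->|xj].
  rewrite (bigD1 j) //= /killed_block eqxx /= scale1r mul1mx big1 ?addr0 // => y yj.
  by rewrite eq_sym (negbTE yj) scale0r mul0mx.
rewrite [X in _ = X - _](bigD1 j) //= addrAC subrr add0r (bigD1 j) //= /killed_block.
rewrite eqxx orbT (negbTE xj) scale0r mul0mx add0r; apply: eq_bigr => y yj.
by rewrite (negbTE yj).
Qed.

Lemma killed_laplacian_inj (v : 'cV[R]_nd) : killed_laplacian *m v = 0 -> v = 0.
Proof.
move=> Kv0.
have vj : blk v j = 0.
  by have := node_block_killed v j; rewrite eqxx Kv0 /node_block submxcol0 => <-.
have CLv x : x != j -> blk (CL *m v) x = 0.
  move=> xj; have := node_block_killed v x; rewrite (negbTE xj) Kv0 vj mulmx0 subr0.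
  by rewrite /node_block submxcol0 => <-.
have E0 : \tr (v^T *m CL *m v) = 0.
  rewrite -mulmxA trmx_mul_node_block raddf_sum big1 //= => x _.
  by case: (eqVneq x j) => [->|/CLv ->]; rewrite ?vj ?trmx0 ?mul0mx ?mulmx0 mxtrace0.
have edge := conn_energy_eq0_edge wsym wge0 w0 sigma_orth E0.
have v0 x : frob2 (blk v x) = 0.
  apply: (connect_transport (P := fun x => frob2 (blk v x) = 0)) (conn j x) _.
    by move=> x' y' wxy; rewrite /frob2 (edge _ _ wxy) gram_orth ?sigma_orth.
  by rewrite vj /frob2 trmx0 mul0mx mxtrace0.
by apply/mxcolP => x; rewrite submxcol0; apply: frob2_eq0; apply: v0.
Qed.

Lemma killed_laplacian_unit : killed_laplacian \in unitmx.
Proof.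
rewrite -unitmx_tr -row_free_unit; apply: inj_row_free => u uK0.
apply: trmx_inj; rewrite trmx0; apply: killed_laplacian_inj.
by rewrite -[LHS]trmxK trmx_mul trmxK uK0 trmx0.
Qed.

Variable h : 'I_n -> 'M[R]_d.
Hypothesis h_j : h j = 1%:M.
Hypothesis h_harmonic :
  forall x, x != j -> deg w x *: h x = \sum_y w x y *: (sigma x y *m h y).

Definition unit_source : 'M[R]_(nd, d) := \mxcol_x (if x == i then 1%:M else 0 : 'M[R]_d).

(* [Nmat w sigma i j] is [dipole i j (Omega0 w sigma ^~ j)]. *)
Definition dipole : 'M[R]_(nd, d) :=
  \mxcol_x (if x == i then 1%:M else if x == j then - (h i)^T else 0 : 'M[R]_d).

Definition green_sol : 'M[R]_(nd, d) := invmx killed_laplacian *m unit_source.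

Lemma killed_green_sol : killed_laplacian *m green_sol = unit_source.
Proof. by rewrite mulKVmx // killed_laplacian_unit. Qed.

Lemma green_sol_j : blk green_sol j = 0.
Proof.
have := node_block_killed green_sol j; rewrite eqxx killed_green_sol => <-.
by rewrite /node_block mxcolK eq_sym (negbTE ij).
Qed.

Lemma conn_laplacian_green_sol_off x :
  x != j -> blk (CL *m green_sol) x = if x == i then 1%:M else 0.
Proof.
move=> xj; have := node_block_killed green_sol x.
rewrite (negbTE xj) killed_green_sol green_sol_j mulmx0 subr0 => <-.
by rewrite /node_block mxcolK.
Qed.

Lemma conn_laplacian_harmonic x : x != j -> blk (CL *m \mxcol_y h y) x = 0.
Proof.
move=> xj; rewrite node_block_conn_laplacian (bigD1 x) //= /conn_block eqxx.
rewrite /node_block mxcolK -scalemxAl mul1mx h_harmonic // (bigD1 x) //= w0 scale0r add0r.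
rewrite -big_split big1 //= => y /negbTE; rewrite eq_sym => ->.
by rewrite mxcolK mulNmx -scalemxAl addrN.
Qed.

Lemma green_identity : blk (CL *m green_sol) j = - (h i)^T.
Proof.
set H := \mxcol_y h y.
have sym : green_sol^T *m (CL *m H) = (CL *m green_sol)^T *m H.
  by rewrite [in RHS]trmx_mul (conn_laplacian_sym wsym wge0 sigma_sym) mulmxA.
have lhs0 : green_sol^T *m (CL *m H) = 0.
  rewrite trmx_mul_node_block big1 // => x _.
  have [->|xj] := eqVneq x j; first by rewrite green_sol_j trmx0 mul0mx.
  by rewrite conn_laplacian_harmonic // mulmx0.
have rhsE : (CL *m green_sol)^T *m H = (blk (CL *m green_sol) j)^T + h i.
  rewrite trmx_mul_node_block (bigD1 j) //= [X in _ + X](bigD1 i) //=.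
  rewrite [X in _ + (_ + X)]big1 ?addr0.
    rewrite (conn_laplacian_green_sol_off ij) /H /node_block !mxcolK h_j mulmx1.
    by rewrite eqxx trmx1 mul1mx.
  move=> x /andP [xj xi]; rewrite conn_laplacian_green_sol_off //.
  by rewrite (negbTE xi) trmx0 mul0mx.
move/eqP: sym; rewrite lhs0 rhsE eq_sym addr_eq0 => /eqP /(congr1 trmx).
by rewrite trmxK linearN.
Qed.

Lemma conn_laplacian_green_sol : CL *m green_sol = dipole.
Proof.
apply/mxcolP => x; rewrite mxcolK.
have [->|xj] := eqVneq x j.
  by rewrite [j == i]eq_sym (negbTE ij); apply: green_identity.
exact: conn_laplacian_green_sol_off.
Qed.

Lemma green_sol_energy : \tr (green_sol^T *m CL *m green_sol) = \tr (blk green_sol i).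
Proof.
rewrite -mulmxA conn_laplacian_green_sol trmx_mul_node_block raddf_sum (bigD1 i) //=.
rewrite /node_block mxcolK eqxx mulmx1 mxtrace_tr big1 ?addr0 // => x xi.
have [->|xj] := eqVneq x j.
  by rewrite -/(node_block _ j) green_sol_j trmx0 mul0mx mxtrace0.
by rewrite mxcolK (negbTE xi) (negbTE xj) mulmx0 mxtrace0.
Qed.

Lemma green_sol_energy_le :
  \tr (green_sol^T *m CL *m green_sol) <= d%:R * eff_res w i j.
Proof.
set f := fun a x => colnorm (blk green_sol x) a.
have f_j a : f a j = 0 by rewrite /f green_sol_j /colnorm trmx0 mul0mx mxE sqrtr0.
have r_ge0 := eff_res_ge0 wsym wge0 conn i j.
rewrite -[d in d%:R]card_ord; apply: (le_card_mul_of_sum_sqr (f := f^~ i)) => //.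
  by rewrite green_sol_energy; apply: ler_sum => a _; apply: diag_le_colnorm.
have := dirichlet_colnorm_le wsym wge0 w0 sigma_orth green_sol.
have : 2 * \sum_a f a i ^+ 2 <= eff_res w i j * \sum_a dirichlet w (f a) (f a).
  rewrite mulr_sumr mulr_sumr; apply: ler_sum => a _.
  by have := sqr_le_eff_res_dirichlet wsym wge0 conn i j (f a); rewrite f_j subr0.
nra.
Qed.

Lemma dipole_energy_le :
  \tr ((pinv CL *m dipole)^T *m CL *m (pinv CL *m dipole)) <= d%:R * eff_res w i j.
Proof.
rewrite -conn_laplacian_green_sol.
rewrite (moore_penrose_energy (conn_laplacian_sym wsym wge0 sigma_sym) (pinvP _)).
exact: green_sol_energy_le.
Qed.

End Green.

Lemma eq_in_foldr (T : eqType) (S : Type) (f g : T -> S -> S) (z : S) (s : seq T) :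
  {in s, f =1 g} -> foldr f z s = foldr g z s.
Proof.
elim: s => [|a s IH] //= fg; rewrite fg ?mem_head // IH // => k ks.
by apply: fg; rewrite in_cons ks orbT.
Qed.

Lemma inord0 t : (inord 0 : 'I_t.+1) = ord0.
Proof. exact: (inord_val (ord0 : 'I_t.+1)). Qed.

Section Walks.
Variables (R : realType) (n d : nat) (w : 'M[R]_n) (sigma : 'I_n -> 'I_n -> 'M[R]_d).

Definition walk_tail t (p : {ffun 'I_t.+2 -> 'I_n}) : {ffun 'I_t.+1 -> 'I_n} :=
  [ffun k => p (lift ord0 k)].

Definition walk_cons t (x : 'I_n) (q : {ffun 'I_t.+1 -> 'I_n}) : {ffun 'I_t.+2 -> 'I_n} :=
  [ffun k => if unlift ord0 k is Some k' then q k' else x].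

Lemma walk_tail_inord t (p : {ffun 'I_t.+2 -> 'I_n}) k : (k <= t)%N ->
  walk_tail p (inord k) = p (inord k.+1).
Proof.
move=> kt; rewrite ffunE; congr (p _); apply: val_inj => /=.
by rewrite /bump /= add1n !inordK.
Qed.

Lemma walk_tail_ord0 t (p : {ffun 'I_t.+2 -> 'I_n}) : walk_tail p ord0 = p (inord 1).
Proof. by rewrite -inord0 walk_tail_inord. Qed.

Lemma walk_consK t x : cancel (@walk_cons t x) (@walk_tail t).
Proof. by move=> q; apply/ffunP => k; rewrite !ffunE liftK. Qed.

Lemma walk_cons_ord0 t x (q : {ffun 'I_t.+1 -> 'I_n}) : walk_cons x q ord0 = x.
Proof. by rewrite ffunE unlift_none. Qed.

Lemma walk_cons_tail t (p : {ffun 'I_t.+2 -> 'I_n}) : walk_cons (p ord0) (walk_tail p) = p.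
Proof. by apply/ffunP => k; rewrite ffunE; case: unliftP => [k'|] ->; rewrite ?ffunE. Qed.

Lemma walk_prob_tail t (p : {ffun 'I_t.+2 -> 'I_n}) :
  walk_prob w p =
  w (p ord0) (walk_tail p ord0) / deg w (p ord0) * walk_prob w (walk_tail p).
Proof.
rewrite /walk_prob big_ord_recl /walk_step /= inord0 walk_tail_ord0; congr (_ * _).
by apply: eq_bigr => k _; rewrite /bump /= add1n !walk_tail_inord // ltnW.
Qed.

Lemma walk_sigma_tail t (p : {ffun 'I_t.+2 -> 'I_n}) :
  walk_sigma sigma p =
  sigma (p ord0) (walk_tail p ord0) *m walk_sigma sigma (walk_tail p).
Proof.
rewrite /walk_sigma /walk_step /= inord0 walk_tail_ord0; congr (_ *m _).
rewrite (iotaDl 1 0) foldr_map; apply: eq_in_foldr => k.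
by rewrite mem_iota add0n add1n => kt; rewrite !walk_tail_inord // ltnW.
Qed.

Lemma first_passage_tail t x j (p : {ffun 'I_t.+2 -> 'I_n}) : x != j ->
  first_passage x j p =
  (p ord0 == x) && first_passage (walk_tail p ord0) j (walk_tail p).
Proof.
move=> xj; rewrite /first_passage; have [p0x|] //= := eqVneq (p ord0) x.
have -> : walk_tail p ord_max = p ord_max by rewrite ffunE; congr (p _); apply: val_inj.
rewrite eqxx; congr (_ && _); apply/forallP/forallP => p_nj k.
  rewrite ffunE; apply/implyP => kt; have := p_nj (lift ord0 k).
  by rewrite /= /bump /= add1n ltnS kt.
case: (unliftP ord0 k) => [k'|] ->; last by rewrite p0x xj implybT.
by have := p_nj k'; rewrite ffunE /= /bump /= add1n ltnS.
Qed.

Lemma sum_first_passage_step (V : nmodType) t x j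
    (F : {ffun 'I_t.+2 -> 'I_n} -> V) : x != j ->
  \sum_(p | first_passage x j p) F p =
  \sum_y \sum_(q : {ffun 'I_t.+1 -> 'I_n} | first_passage y j q) F (walk_cons x q).
Proof.
move=> xj; rewrite (reindex_onto (@walk_cons t x) (@walk_tail t)) => [|p]; last first.
  by rewrite first_passage_tail // => /andP [/eqP <- _]; rewrite walk_cons_tail.
rewrite (partition_big (fun q : {ffun 'I_t.+1 -> 'I_n} => q ord0) predT) //=.
apply: eq_bigr => y _; apply: eq_bigl => q.
rewrite first_passage_tail // walk_consK walk_cons_ord0 !eqxx andbT /=.
by have [->|ne] := eqVneq (q ord0) y; rewrite ?andbT // andbF /first_passage (negbTE ne).
Qed.

Lemma first_passage0 x j (p : {ffun 'I_1 -> 'I_n}) :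
  first_passage x j p = (p ord0 == x) && (p ord0 == j).
Proof.
rewrite /first_passage (_ : ord_max = ord0); last exact: val_inj.
by congr (_ && _); rewrite andb_idr // => _; apply/forallP => -[[]].
Qed.

Lemma sum_first_passage0 (V : nmodType) x j (F : {ffun 'I_1 -> 'I_n} -> V) :
  \sum_(p | first_passage x j p) F p = if x == j then F [ffun => j] else 0.
Proof.
have [<-|xj] := eqVneq x j.
  rewrite (big_pred1 [ffun => x]) // => p /=; rewrite first_passage0 andbb.
  by apply/eqP/eqP => [p0|->]; [apply/ffunP => k; rewrite ord1 p0 ffunE | rewrite ffunE].
rewrite big1 // => p; rewrite first_passage0 => /andP [/eqP p0 /eqP pj].
by move: xj; rewrite -p0 pj eqxx.
Qed.

Lemma sum_first_passage_loop (V : nmodType) t j (F : {ffun 'I_t.+2 -> 'I_n} -> V) :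
  \sum_(p | first_passage j j p) F p = 0.
Proof.
by rewrite big1 // => p /and3P [/eqP p0 _ /forallP /(_ ord0)]; rewrite /= p0 eqxx.
Qed.

End Walks.

Lemma orthogonal_entry_le1 (R : realFieldType) p (M : 'M[R]_p) a b :
  M^T *m M = 1%:M -> `|M a b| <= 1.
Proof.
move=> MM; have := gram_diagE M b; rewrite MM mxE eqxx mulr1n (bigD1 a) //= => /esym sum1.
rewrite -(expr_le1 (n := 2)) // real_normK ?num_real // -sum1 lerDl.
by apply: sumr_ge0 => c _; rewrite sqr_ge0.
Qed.

Section FirstPassage.
Variables (R : realType) (n d : nat) (w : 'M[R]_n) (sigma : 'I_n -> 'I_n -> 'M[R]_d).
Hypothesis wge0 : forall x y, 0 <= w x y.
Hypothesis conn : forall x y, connect (adj w) x y.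
Hypothesis sigma_orth : forall x y, 0 < w x y -> (sigma x y)^T *m sigma x y = 1%:M.

Definition hit_prob (x j : 'I_n) t : R :=
  \sum_(p : {ffun 'I_t.+1 -> 'I_n} | first_passage x j p) walk_prob w p.

Lemma hit_prob0 x j : hit_prob x j 0 = if x == j then 1 else 0.
Proof. by rewrite /hit_prob sum_first_passage0 /walk_prob big_ord0. Qed.

Lemma hit_prob_loop t j : hit_prob j j t.+1 = 0.
Proof. exact: sum_first_passage_loop. Qed.

Lemma hit_prob_step t x j : x != j ->
  hit_prob x j t.+1 = \sum_y (w x y / deg w x) * hit_prob y j t.
Proof.
move=> xj; rewrite /hit_prob sum_first_passage_step //; apply: eq_bigr => y _.
rewrite mulr_sumr; apply: eq_bigr => q /and3P [/eqP q0 _ _].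
by rewrite walk_prob_tail walk_consK walk_cons_ord0 q0.
Qed.

Lemma omega_term0 x j : omega_term w sigma x j 0 = if x == j then 1%:M else 0.
Proof. by rewrite /omega_term sum_first_passage0 /walk_prob big_ord0 scale1r. Qed.

Lemma omega_term_loop t j : omega_term w sigma j j t.+1 = 0.
Proof. exact: sum_first_passage_loop. Qed.

Lemma omega_term_step t x j : x != j ->
  omega_term w sigma x j t.+1 =
  \sum_y (w x y / deg w x) *: (sigma x y *m omega_term w sigma y j t).
Proof.
move=> xj; rewrite /omega_term sum_first_passage_step //; apply: eq_bigr => y _.
rewrite mulmx_sumr scaler_sumr; apply: eq_bigr => q /and3P [/eqP q0 _ _].
by rewrite walk_prob_tail walk_sigma_tail walk_consK walk_cons_ord0 q0 -scalemxAr scalerA.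
Qed.

Lemma deg_gt0 x j : x != j -> 0 < deg w x.
Proof.
move=> xj; have /connectP [[|y p] /= xyp] := conn x j.
  by move=> jx; rewrite jx eqxx in xj.
move: xyp => /andP [xy _] _; apply: lt_le_trans xy _.
by rewrite /deg (bigD1 y) //= lerDl sumr_ge0.
Qed.

Lemma transition_sum1 x j : x != j -> \sum_y w x y / deg w x = 1.
Proof. by move=> xj; rewrite -mulr_suml divff // gt_eqF // (deg_gt0 xj). Qed.

Lemma walk_prob_ge0 t (p : {ffun 'I_t.+1 -> 'I_n}) : 0 <= walk_prob w p.
Proof. by apply: prodr_ge0 => k _; rewrite divr_ge0 ?sumr_ge0. Qed.

Lemma hit_prob_ge0 x j t : 0 <= hit_prob x j t.
Proof. by apply: sumr_ge0 => p _; apply: walk_prob_ge0. Qed.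

Lemma walk_sigma_orth t (p : {ffun 'I_t.+1 -> 'I_n}) : walk_prob w p != 0 ->
  (walk_sigma sigma p)^T *m walk_sigma sigma p = 1%:M.
Proof.
elim: t p => [|t IH] p; first by rewrite /walk_sigma /= trmx1 mul1mx.
rewrite walk_prob_tail walk_sigma_tail !mulf_eq0 !negb_or => /andP [/andP [wn0 _] pn0].
by rewrite gram_orth ?IH // sigma_orth // lt_neqAle eq_sym wn0 wge0.
Qed.

Lemma omega_term_entry_le x j t a b : `|omega_term w sigma x j t a b| <= hit_prob x j t.
Proof.
rewrite /omega_term summxE; apply: le_trans (ler_norm_sum _ _ _) (ler_sum _ _) => p _.
rewrite mxE normrM ger0_norm ?walk_prob_ge0 //.
have [->|pn0] := eqVneq (walk_prob w p) 0; first by rewrite mul0r.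
by rewrite ler_piMr ?walk_prob_ge0 // orthogonal_entry_le1 // walk_sigma_orth.
Qed.

Lemma hit_prob_series_le1 x j N : \sum_(0 <= t < N) hit_prob x j t <= 1.
Proof.
elim: N x => [|N IH] x; first by rewrite big_geq.
rewrite big_nat_recl // hit_prob0; have [->|xj] := eqVneq x j.
  by rewrite big1 ?addr0 // => t _; rewrite hit_prob_loop.
under eq_bigr do rewrite hit_prob_step //.
rewrite add0r exchange_big /= -(transition_sum1 xj); apply: ler_sum => y _.
by rewrite -mulr_sumr ler_piMr ?divr_ge0 ?sumr_ge0.
Qed.

Lemma omega_series_cvg x j a b :
  cvgn (series (fun t => omega_term w sigma x j t a b)).
Proof.
apply: normed_cvg; apply: (@series_le_cvg R _ (hit_prob x j)) => //.
- by move=> t; apply: normr_ge0.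
- by move=> t; apply: hit_prob_ge0.
- by move=> t; apply: omega_term_entry_le.
apply: nondecreasing_is_cvgn.
  by apply/nondecreasing_seqP => N; rewrite /series /= big_nat_recr //= lerDl hit_prob_ge0.
by exists 1 => _ [N _ <-]; apply: hit_prob_series_le1.
Qed.

Lemma omega_series_step x j a b N : x != j ->
  series (fun t => omega_term w sigma x j t a b) N.+1 =
  \sum_y (w x y / deg w x) *
     \sum_c sigma x y a c * series (fun t => omega_term w sigma y j t c b) N.
Proof.
move=> xj; rewrite /series /= big_nat_recl // omega_term0 (negbTE xj) mxE add0r.
under eq_bigr do rewrite omega_term_step // summxE.
rewrite exchange_big /=; apply: eq_bigr => y _.
under eq_bigr do rewrite !mxE; rewrite -mulr_sumr; congr (_ * _).
by rewrite exchange_big /=; apply: eq_bigr => c _; rewrite mulr_sumr.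
Qed.

Lemma Omega0_step x j : x != j ->
  Omega0 w sigma x j = \sum_y (w x y / deg w x) *: (sigma x y *m Omega0 w sigma y j).
Proof.
move=> xj; apply/matrixP => a b; rewrite summxE mxE.
under eq_bigr do rewrite !mxE; under eq_bigr do under eq_bigr do rewrite mxE.
apply: cvg_lim => //; rewrite -cvg_shiftS.
under eq_fun do rewrite omega_series_step //.
apply: (@cvg_big R _ +%R 0 xpredT add_continuous) => // y _.
apply: cvgMl_tmp; apply: (@cvg_big R _ +%R 0 xpredT add_continuous) => // c _.
by apply: cvgMl_tmp; apply: omega_series_cvg.
Qed.

Lemma Omega0_harmonic x j : x != j ->
  deg w x *: Omega0 w sigma x j = \sum_y w x y *: (sigma x y *m Omega0 w sigma y j).
Proof.
move=> xj; rewrite Omega0_step // scaler_sumr; apply: eq_bigr => y _.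
by rewrite scalerA mulrCA divff ?mulr1 // gt_eqF // (deg_gt0 xj).
Qed.

Lemma Omega0_diag j : Omega0 w sigma j j = 1%:M.
Proof.
apply/matrixP => a b; rewrite [LHS]mxE; apply: cvg_lim => //; rewrite -cvg_shiftS.
have -> : (fun N => series (fun t => omega_term w sigma j j t a b) N.+1) =
          fun=> (1%:M : 'M[R]_d) a b.
  apply/funext => N; rewrite /series /= big_nat_recl // omega_term0 eqxx.
  by rewrite big1 ?addr0 // => t _; rewrite omega_term_loop mxE.
exact: cvg_cst.
Qed.

End FirstPassage.

Unset Implicit Arguments.

Theorem proposition6p12 (R : realType) (n d : nat) (w : 'M[R]_n)
  (sigma : 'I_n -> 'I_n -> 'M[R]_d) :
  (0 < d)%N -> connection_graph w sigma ->
  forall i j : 'I_n, i != j -> conn_eff_res w sigma i j <= eff_res w i j.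
Proof.
move=> d_gt0 [wsym [wge0 [w0 [conn [sigma_orth sigma_sym]]]]] i j ij.
have energy_le x y : x != y ->
    \tr ((Wmat w sigma x y)^T *m conn_laplacian w sigma *m Wmat w sigma x y)
    <= d%:R * eff_res w x y.
  move=> xy; apply: (dipole_energy_le wsym wge0 w0 conn sigma_orth sigma_sym xy
    (h := fun z => Omega0 w sigma z y) (Omega0_diag w sigma y)).
  by move=> z zy; apply: Omega0_harmonic.
have ji : j != i by rewrite eq_sym.
have := lerD (energy_le i j ij) (energy_le j i ji).
rewrite [eff_res w j i]eff_res_sym => le_sum.
rewrite /conn_eff_res mxtraceD; apply: le_trans (ler_wpM2l _ le_sum) _.
  by rewrite invr_ge0 mulr_ge0 ?ler0n.
set r := eff_res w i j.
suff -> : (2 * d%:R)^-1 * (d%:R * r + d%:R * r) = r :> R by [].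
by field; rewrite pnatr_eq0 -lt0n.
Qed.
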